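(* Let $(X,p_X)$ be a non-empty partial metric space. Then there exists a partial metric space $(Y,p_Y)$ with $X\subseteq Y$ and $p_Y$ restricting to $p_X$ on $X\times X$, such that $X$ is dense in $Y$ but $X$ is not symmetrically dense in $Y$.
   Context: A partial metric on a set $X$ is a function $p_X\colon X\times X\to\mathbb{R}_{\geq0}$ such that for all $x,y,z\in X$: (P1) $p_X(x,x)=p_X(x,y)=p_X(y,y)$ implies $x=y$; (P2) $p_X(x,x)\leq p_X(x,y)$; (P3) $p_X(x,y)=p_X(y,x)$; (P4) $p_X(x,z)+p_X(y,y)\leq p_X(x,y)+p_X(y,z)$. For $x\in X$ and $\varepsilon>0$, the open ball is $B_\varepsilon(x)=\{y\in X: p_X(x,y)<p_X(x,x)+\varepsilon\}$. A subset $A\subseteq X$ is dense in $X$ if for every $x\in X$ and every $\varepsilon>0$ there is $y\in A$ with $y\in B_\varepsilon(x)$. It is symmetrically dense in $X$ if for every $x\in X$ and every $\varepsilon>0$ there is $y\in A$ with $x\in B_\varepsilon(y)$ and $y\in B_\varepsilon(x)$. *)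

From Stdlib Require Import Reals.
Open Scope R_scope.

Definition is_partial_metric {X : Type} (p : X -> X -> R) : Prop :=
  (forall x y, 0 <= p x y) /\
  (forall x y, p x x = p x y -> p x y = p y y -> x = y) /\
  (forall x y, p x x <= p x y) /\
  (forall x y, p x y = p y x) /\
  (forall x y z, p x z + p y y <= p x y + p y z).

Definition pball {X : Type} (p : X -> X -> R) (x : X) (eps : R) (y : X) : Prop :=
  p x y < p x x + eps.

Definition pdense {X : Type} (p : X -> X -> R) (A : X -> Prop) : Prop :=
  forall x eps, 0 < eps -> exists y, A y /\ pball p x eps y.

Definition psym_dense {X : Type} (p : X -> X -> R) (A : X -> Prop) : Prop :=
  forall x eps, 0 < eps ->
    exists y, A y /\ pball p y eps x /\ pball p x eps y.

From Stdlib Require Import Reals Lra.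
Open Scope R_scope.

(* Adjoin to X a point top (the value [None] of [option X]) at height c > 0
   above a fixed x0, i.e. p(top, x) = p(x0, x) + c.  Every ball around top
   contains x0, since p(top, x0) = p(top, top); but no ball of radius c
   around a point x of X contains top, because p(x, top) >= p(x, x) + c. *)

Section AdjoinPoint.

Variables (X : Type) (p : X -> X -> R) (x0 : X) (c : R).
Hypothesis c_pos : 0 < c.
Hypothesis p_nonneg : forall x y, 0 <= p x y.
Hypothesis p_sep : forall x y, p x x = p x y -> p x y = p y y -> x = y.
Hypothesis p_self_le : forall x y, p x x <= p x y.
Hypothesis p_sym : forall x y, p x y = p y x.
Hypothesis p_triangle : forall x y z, p x z + p y y <= p x y + p y z.

Definition adjoin_point (u v : option X) : R :=
  match u, v with
  | Some x, Some y => p x y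
  | None, Some y => p x0 y + c
  | Some x, None => p x0 x + c
  | None, None => p x0 x0 + c
  end.

Lemma p_self_le_r x y : p y y <= p x y.
Proof. rewrite (p_sym x y); apply p_self_le. Qed.

Lemma adjoin_point_partial_metric : is_partial_metric adjoin_point.
Proof.
  split; [| split; [| split; [| split]]].
  - intros [x|] [y|]; simpl.
    + apply p_nonneg.
    + pose proof (p_nonneg x0 x); lra.
    + pose proof (p_nonneg x0 y); lra.
    + pose proof (p_nonneg x0 x0); lra.
  - intros [x|] [y|]; simpl; intros Hxy Hyx; try reflexivity.
    + f_equal; auto.
    + pose proof (p_self_le_r x0 x); lra.
    + pose proof (p_self_le_r x0 y); lra.
  - intros [x|] [y|]; simpl; try lra.
    + apply p_self_le.
    + pose proof (p_self_le_r x0 x); lra.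
    + pose proof (p_self_le x0 y); lra.
  - intros [x|] [y|]; simpl; auto.
  - intros [x|] [y|] [z|]; simpl; try lra.
    + apply p_triangle.
    + pose proof (p_triangle x0 y x); rewrite (p_sym y x) in *; lra.
    + pose proof (p_triangle x x0 z); rewrite (p_sym x x0) in *; lra.
    + pose proof (p_triangle x0 y z); lra.
    + pose proof (p_triangle x0 y x0); rewrite (p_sym y x0) in *; lra.
Qed.

Lemma adjoin_point_dense : pdense adjoin_point (fun v => exists x, Some x = v).
Proof.
  intros [x|] eps Heps; [exists (Some x) | exists (Some x0)];
    split; eauto; unfold pball; simpl; lra.
Qed.

Lemma adjoin_point_not_sym_dense :
  ~ psym_dense adjoin_point (fun v => exists x, Some x = v).
Proof.
  intros Hsym.
  destruct (Hsym None c c_pos) as [v [[x <-] [Hball _]]].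
  unfold pball in Hball; simpl in Hball.
  pose proof (p_self_le_r x0 x); lra.
Qed.

End AdjoinPoint.

Theorem lemma1p3 (X : Type) (pX : X -> X -> R) :
  is_partial_metric pX -> inhabited X ->
  exists (Y : Type) (pY : Y -> Y -> R) (i : X -> Y),
    is_partial_metric pY /\
    (forall x1 x2, i x1 = i x2 -> x1 = x2) /\
    (forall x1 x2, pY (i x1) (i x2) = pX x1 x2) /\
    pdense pY (fun y => exists x, i x = y) /\
    ~ psym_dense pY (fun y => exists x, i x = y).
Proof.
  intros (Hnonneg & Hsep & Hself & Hsym & Htri) [x0].
  exists (option X), (adjoin_point X pX x0 1), Some.
  split; [| split; [| split; [| split]]].
  - apply adjoin_point_partial_metric; auto; lra.
  - intros x1 x2 E; injection E; auto.
  - reflexivity.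
  - apply adjoin_point_dense.
  - apply adjoin_point_not_sym_dense; auto; lra.
Qed.
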